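(* Let $\mathbb{K}$ be a positive commutative monoid and let $R_1,\dots,R_m$ be a collection of $\mathbb{K}$-relations. The following are equivalent: (1) the collection is globally consistent; (2) the collection is globally consistent up to every cover of $\mathbb{K}$; (3) the collection is globally consistent up to some cover of $\mathbb{K}$.
   Context: Positive: $p+q=0\Rightarrow p=q=0$. For a finite attribute set $X$ (attributes have domains), a $\mathbb{K}$-relation over $X$ is a map $R$ from $X$-tuples to $K$ with finite support $R'$; $t[Y]$ is restriction; marginals $R[Y](t)=\sum_{r\in R',r[Y]=t}R(r)$. With $R_i$ over $X_i$, the collection is $k$-wise consistent if for every $q\le k$ and $i_1,\dots,i_q\in[m]$ some $\mathbb{K}$-relation $W$ over $X_{i_1}\cup\dots\cup X_{i_q}$ has $W[X_{i_j}]=R_{i_j}$ for all $j$; globally consistent means $m$-wise. A cover of $\mathbb{K}$ is a pair $(\mathbb{K}^*,h)$ with $\mathbb{K}^*$ a positive commutative monoid and $h:\mathbb{K}^*\to\mathbb{K}$ a surjective monoid homomorphism. An $h$-lift of a $\mathbb{K}$-relation $R$ over $Y$ is a $\mathbb{K}^*$-relation $R^*$ over $Y$ with $h(R^*(t))=R(t)$ for all $Y$-tuples $t$. The collection is $k$-wise (in particular globally) consistent up to the cover if there are $h$-lifts $R_1^*,\dots,R_m^*$ of $R_1,\dots,R_m$ forming a $k$-wise (globally) consistent collection of $\mathbb{K}^*$-relations. *)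

From HB Require Import structures.
From mathcomp Require Import all_boot all_order all_algebra.
From mathcomp Require Import finmap.
Set Implicit Arguments. Unset Strict Implicit. Unset Printing Implicit Defensive.
Import Order.TTheory GRing.Theory Num.Theory.
Local Open Scope fset_scope.
Local Open Scope fmap_scope.
Local Open Scope ring_scope.

(* A commutative monoid is an nmodType (written additively, identity 0).
   Positivity: p + q = 0 implies p = q = 0. *)
Definition positive_monoid (K : nmodType) : Prop :=
  forall p q : K, p + q = 0 -> p = 0 /\ q = 0.

Section KRel.
(* Attributes range over [Att]; each attribute [a] has the domain
   [[pred v | dom a v]] inside a common value type [Val]. *)
Variables (Att Val : choiceType) (dom : Att -> Val -> bool).

Definition is_tuple (X : {fset Att}) (t : {fmap Att -> Val}) : bool :=
  (domf t == X) && [forall a : domf t, dom (val a) (t a)].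

(* A K-relation is represented by a finite map from tuples to K; its value
   at a tuple t is the stored value, or 0 if t is not a key.
   Hence every such map has finite support. *)
Definition krel (K : nmodType) := {fmap {fmap Att -> Val} -> K}.

Definition kval (K : nmodType) (R : krel K) (t : {fmap Att -> Val}) : K :=
  odflt 0 R.[? t].

Definition krel_over (K : nmodType) (X : {fset Att}) (R : krel K) : bool :=
  [forall t : domf R, is_tuple X (val t)].

(* Marginal R[Y](t) = sum_{r in support of R, r[Y] = t} R(r)
   (keys with value 0 contribute 0, so summing over all keys is the same). *)
Definition marginal (K : nmodType) (R : krel K) (Y : {fset Att})
    (t : {fmap Att -> Val}) : K :=
  \sum_(r : domf R | (val r).[& Y] == t) R r.

Definition kwise_consistent (K : nmodType) (m k : nat)
    (X : 'I_m -> {fset Att}) (R : 'I_m -> krel K) : Prop :=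
  forall (q : nat) (idx : 'I_q -> 'I_m), (q <= k)%N ->
    exists W : krel K,
      krel_over (\big[@fsetU Att/fset0]_(j < q) X (idx j)) W /\
      forall j : 'I_q, forall t, marginal W (X (idx j)) t = kval (R (idx j)) t.

Definition globally_consistent (K : nmodType) (m : nat)
    (X : 'I_m -> {fset Att}) (R : 'I_m -> krel K) : Prop :=
  kwise_consistent m X R.

Definition is_cover (K Ks : nmodType) (h : Ks -> K) : Prop :=
  positive_monoid Ks /\ h 0 = 0 /\ (forall a b, h (a + b) = h a + h b) /\
  (forall y : K, exists x : Ks, h x = y).

Definition h_lift (K Ks : nmodType) (h : Ks -> K) (Y : {fset Att})
    (Rs : krel Ks) (R : krel K) : Prop :=
  krel_over Y Rs /\ forall t, h (kval Rs t) = kval R t.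

Definition globally_consistent_up_to (K Ks : nmodType) (h : Ks -> K) (m : nat)
    (X : 'I_m -> {fset Att}) (R : 'I_m -> krel K) : Prop :=
  exists Rs : 'I_m -> krel Ks,
    (forall i, h_lift h (X i) (Rs i) (R i)) /\ globally_consistent X Rs.

End KRel.

(* Lifting along a cover h : Ks -> K and pushing forward along h both commute
   with marginals, because h is a monoid homomorphism.  Hence (3) implies (1):
   push the witnesses of consistency of the lifts forward along h.  For (1)
   implies (2), lift a single witness W of global consistency pointwise through
   a section of h; the marginals of the lifted W are h-lifts of the R_i, and any
   subfamily of them is witnessed by the marginal of the lifted W on the union
   of its attribute sets.  Finally (2) implies (3) via the identity cover, which
   is a cover precisely because K is positive. *)

From mathcomp Require Import all_boot all_algebra.
From mathcomp Require Import finmap.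
Set Implicit Arguments. Unset Strict Implicit. Unset Printing Implicit Defensive.
Import GRing.Theory.
Local Open Scope fset_scope.
Local Open Scope fmap_scope.

Section KRelations.
Variables (Att Val : choiceType) (dom : Att -> Val -> bool).
Implicit Types (K Ks : nmodType) (U Y Z : {fset Att}).

Lemma is_tupleP U (t : {fmap Att -> Val}) :
  is_tuple dom U t <-> domf t = U /\ forall a v, t.[? a] = Some v -> dom a v.
Proof.
split=> [/andP[/eqP dt /forallP tdom] | [dt tdom]].
  split=> // a v; case: fndP => // af [<-]; exact: (tdom [` af]).
apply/andP; split; first exact/eqP.
by apply/forallP => a; apply: tdom; rewrite Some_fnd.
Qed.

Lemma is_tuple_restrict U Y t :
  Y `<=` U -> is_tuple dom U t -> is_tuple dom Y t.[& Y].
Proof.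
move=> sYU /is_tupleP[dt tdom]; apply/is_tupleP; split.
  by rewrite domf_restrict dt; apply/fsetIidPl.
by move=> a v; rewrite fnd_restrict; case: (a \in Y) => //; apply: tdom.
Qed.

Lemma bigfsetU_sup q (F : 'I_q -> {fset Att}) j :
  F j `<=` \big[@fsetU Att/fset0]_(i < q) F i.
Proof. exact: bigfcup_sup (mem_index_enum j) _. Qed.

Lemma bigfsetU_sub q (F : 'I_q -> {fset Att}) U :
  (forall i, F i `<=` U) -> \big[@fsetU Att/fset0]_(i < q) F i `<=` U.
Proof. by move=> sFU; apply/bigfcupsP => i _ _. Qed.

Definition map_krel K Ks (f : Ks -> K) (W : krel Att Val Ks) : krel Att Val K :=
  [fmap r : domf W => f (W r)].

Lemma map_krel_over K Ks (f : Ks -> K) U W :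
  krel_over dom U W -> krel_over dom U (map_krel f W).
Proof. by []. Qed.

Lemma map_krelK K Ks (f : K -> Ks) (g : Ks -> K) W :
  cancel f g -> map_krel g (map_krel f W) = W.
Proof.
move=> fK; apply/fmapP => t; case: fndP => [tW | tNW]; last by rewrite not_fnd.
by rewrite in_fnd /= !ffunE /= fK.
Qed.

Lemma marginal_map_krel K Ks (f : Ks -> K) W Y t :
  nmod_morphism f -> marginal (map_krel f W) Y t = f (marginal W Y t).
Proof.
case=> f0 fD; rewrite /marginal (big_morph f fD f0).
by apply: eq_bigr => r _; rewrite ffunE.
Qed.

Definition marginal_krel K (W : krel Att Val K) Y : krel Att Val K :=
  [fmap s : [fset r.[& Y] | r in domf W] => marginal W Y (val s)].

Lemma kval_marginal_krel K (W : krel Att Val K) Y t :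
  kval (marginal_krel W Y) t = marginal W Y t.
Proof.
rewrite /kval; case: fndP => [tM | tNM] /=; first by rewrite ffunE.
rewrite /marginal big1 // => r /eqP rYt; case/negP: tNM.
by rewrite -rYt; apply/imfsetP; exists (val r) => //; apply: valP.
Qed.

Lemma marginal_krel_over K (W : krel Att Val K) U Y :
  Y `<=` U -> krel_over dom U W -> krel_over dom Y (marginal_krel W Y).
Proof.
move=> sYU /forallP WU; apply/forallP => s.
case/imfsetP: (valP s) => r rW ->.
exact: is_tuple_restrict sYU (WU [` rW]).
Qed.

Lemma marginal_marginal_krel K (W : krel Att Val K) Y Z t :
  Y `<=` Z -> marginal (marginal_krel W Z) Y t = marginal W Y t.
Proof.
move=> sYZ; have restrictYZ (r : {fmap Att -> Val}) : r.[& Z].[& Y] = r.[& Y].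
  by rewrite restrictf_comp (fsetIidPr sYZ).
have rZ (r : domf W) : (val r).[& Z] \in domf (marginal_krel W Z).
  by apply/imfsetP; exists (val r) => //; apply: valP.
pose p (r : domf W) : domf (marginal_krel W Z) := [` rZ r].
rewrite /marginal (partition_big p (fun s => (val s).[& Y] == t)); last first.
  by move=> r /=; rewrite restrictYZ.
apply: eq_bigr => s /eqP sYt; rewrite ffunE; apply: eq_bigl => r.
rewrite -val_eqE /=; apply/eqP/andP => [rZs | [_ /eqP //]].
by rewrite -sYt /= -rZs restrictYZ !eqxx.
Qed.

Lemma kwise_consistent_marginals K k m (X : 'I_m -> {fset Att})
    (W : krel Att Val K) U :
  krel_over dom U W -> (forall i, X i `<=` U) ->
  kwise_consistent dom k X (fun i => marginal_krel W (X i)).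
Proof.
move=> WU sXU q idx _.
set V := \big[@fsetU Att/fset0]_(j < q) X (idx j).
have sVU : V `<=` U by apply: bigfsetU_sub => j.
exists (marginal_krel W V); split; first exact: marginal_krel_over WU.
move=> j t; rewrite kval_marginal_krel marginal_marginal_krel //.
exact: bigfsetU_sup (fun j => X (idx j)) j.
Qed.

Lemma kwise_consistent_hom K Ks (h : Ks -> K) k m (X : 'I_m -> {fset Att})
    (Rs : 'I_m -> krel Att Val Ks) (R : 'I_m -> krel Att Val K) :
  nmod_morphism h -> (forall i t, h (kval (Rs i) t) = kval (R i) t) ->
  kwise_consistent dom k X Rs -> kwise_consistent dom k X R.
Proof.
move=> hM hRs Rs_cons q idx qk; have [Ws [WsV WsRs]] := Rs_cons q idx qk.
exists (map_krel h Ws); split; first exact: map_krel_over.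
by move=> j t; rewrite marginal_map_krel // WsRs.
Qed.

Section Covers.
Variables (K Ks : nmodType) (h : Ks -> K).
Hypothesis h_cover : is_cover h.

Lemma cover_nmod_morphism : nmod_morphism h.
Proof. by case: h_cover => _ [h0 [hD _]]. Qed.

Lemma cover_section : {g : K -> Ks | cancel g h}.
Proof.
case: h_cover => _ [_ [_ h_surj]].
have h_surjb y : exists x, h x == y by case: (h_surj y) => x <-; exists x.
by exists (fun y => xchoose (h_surjb y)) => y; apply/eqP/(xchooseP (h_surjb y)).
Qed.

Lemma consistent_up_to_cover m (X : 'I_m -> {fset Att})
    (R : 'I_m -> krel Att Val K) :
  globally_consistent_up_to dom h X R -> globally_consistent dom X R.
Proof.
case=> Rs [Rs_lift Rs_cons].
apply: kwise_consistent_hom cover_nmod_morphism _ Rs_cons.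
by move=> i; case: (Rs_lift i).
Qed.

Lemma consistent_lift_cover m (X : 'I_m -> {fset Att})
    (R : 'I_m -> krel Att Val K) :
  globally_consistent dom X R -> globally_consistent_up_to dom h X R.
Proof.
move=> R_cons; have [W [WU WR]] := R_cons m id (leqnn m).
have [g gK] := cover_section.
have sXU i : X i `<=` \big[@fsetU Att/fset0]_(j < m) X (id j).
  exact: bigfsetU_sup.
exists (fun i => marginal_krel (map_krel g W) (X i)); split; last first.
  exact: kwise_consistent_marginals (map_krel_over _ WU) sXU.
move=> i; split; first exact: marginal_krel_over (sXU i) (map_krel_over _ WU).
move=> t; rewrite kval_marginal_krel -marginal_map_krel ?map_krelK ?WR //.
exact: cover_nmod_morphism.
Qed.

End Covers.

End KRelations.

Lemma id_cover (K : nmodType) : positive_monoid K -> is_cover (@id K).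
Proof. by move=> posK; do !split => //; move=> y; exists y. Qed.

Theorem proposition42 (Att Val : choiceType) (dom : Att -> Val -> bool)
    (K : nmodType) (posK : positive_monoid K) (m : nat)
    (X : 'I_m -> {fset Att}) (R : 'I_m -> krel Att Val K)
    (HR : forall i, krel_over dom (X i) (R i)) :
  (globally_consistent dom X R <->
     (forall (Ks : nmodType) (h : Ks -> K), is_cover h ->
        globally_consistent_up_to dom h X R)) /\
  (globally_consistent dom X R <->
     (exists (Ks : nmodType) (h : Ks -> K), is_cover h /\
        globally_consistent_up_to dom h X R)).
Proof.
have lift (Ks : nmodType) (h : Ks -> K) : is_cover h ->
    globally_consistent dom X R -> globally_consistent_up_to dom h X R.
  by move=> h_cover; apply: consistent_lift_cover.
have push (Ks : nmodType) (h : Ks -> K) : is_cover h ->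
    globally_consistent_up_to dom h X R -> globally_consistent dom X R.
  by move=> h_cover; apply: consistent_up_to_cover.
have idK := id_cover posK.
split; split.
- by move=> R_cons Ks h h_cover; apply: lift.
- by move=> all_covers; apply: push idK (all_covers K id idK).
- by move=> R_cons; exists K, id; split; last exact: lift.
- by case=> Ks [h [h_cover]]; apply: push.
Qed.
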